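(* Let $m_1,m_2,m_3,m_4>0$, $M=\sum m_i$, and for $\mathbf{r}=(r_{12},r_{13},r_{14},r_{23},r_{24},r_{34})$ let $U(\mathbf{r})=\sum_{i<j}\frac{m_im_j}{r_{ij}}$, $I(\mathbf{r})=\frac{1}{2M}\sum_{i<j}m_im_jr_{ij}^2$, $P(\mathbf{r})=r_{12}r_{34}+r_{14}r_{23}-r_{13}r_{24}$, and $\mathcal{M}^+=\{\mathbf{r}\in[0,\infty)^6: I(\mathbf{r})=1,\ P(\mathbf{r})=0\}$. Then the function $U|_{\mathcal{M}^+}$ has a unique critical point on $\mathcal{M}^+$.
   Context: $U=+\infty$ where some $r_{ij}=0$ (the boundary of $\mathcal{M}^+$); the set of points of $\mathcal{M}^+$ with all $r_{ij}>0$ is a smooth 4-dimensional manifold, and a critical point of $U|_{\mathcal{M}^+}$ is a point there at which the gradient of $U$ is a linear combination of the gradients of $I$ and $P$. *)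

From Stdlib Require Import Reals Lra.
From Coquelicot Require Import Coquelicot.
Open Scope R_scope.

Record conf := mkconf { r12 : R; r13 : R; r14 : R; r23 : R; r24 : R; r34 : R }.

Definition coord (k : nat) (x : conf) : R :=
  match k with
  | 0%nat => r12 x | 1%nat => r13 x | 2%nat => r14 x
  | 3%nat => r23 x | 4%nat => r24 x | _ => r34 x
  end.

Definition setc (k : nat) (t : R) (x : conf) : conf :=
  match k with
  | 0%nat => mkconf t (r13 x) (r14 x) (r23 x) (r24 x) (r34 x)
  | 1%nat => mkconf (r12 x) t (r14 x) (r23 x) (r24 x) (r34 x)
  | 2%nat => mkconf (r12 x) (r13 x) t (r23 x) (r24 x) (r34 x)
  | 3%nat => mkconf (r12 x) (r13 x) (r14 x) t (r24 x) (r34 x)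
  | 4%nat => mkconf (r12 x) (r13 x) (r14 x) (r23 x) t (r34 x)
  | _ => mkconf (r12 x) (r13 x) (r14 x) (r23 x) (r24 x) t
  end.

Definition partial (F : conf -> R) (k : nat) (x : conf) : R :=
  Derive (fun t => F (setc k t x)) (coord k x).

Definition Mtot (m1 m2 m3 m4 : R) : R := m1 + m2 + m3 + m4.

Definition Upot (m1 m2 m3 m4 : R) (x : conf) : R :=
  m1 * m2 / r12 x + m1 * m3 / r13 x + m1 * m4 / r14 x
  + m2 * m3 / r23 x + m2 * m4 / r24 x + m3 * m4 / r34 x.

Definition Imom (m1 m2 m3 m4 : R) (x : conf) : R :=
  / (2 * Mtot m1 m2 m3 m4) *
  (m1 * m2 * r12 x ^ 2 + m1 * m3 * r13 x ^ 2 + m1 * m4 * r14 x ^ 2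
   + m2 * m3 * r23 x ^ 2 + m2 * m4 * r24 x ^ 2 + m3 * m4 * r34 x ^ 2).

Definition Pcay (x : conf) : R :=
  r12 x * r34 x + r14 x * r23 x - r13 x * r24 x.

Definition in_Mplus (m1 m2 m3 m4 : R) (x : conf) : Prop :=
  0 <= r12 x /\ 0 <= r13 x /\ 0 <= r14 x /\ 0 <= r23 x /\ 0 <= r24 x /\ 0 <= r34 x
  /\ Imom m1 m2 m3 m4 x = 1 /\ Pcay x = 0.

Definition critical_point (m1 m2 m3 m4 : R) (x : conf) : Prop :=
  in_Mplus m1 m2 m3 m4 x
  /\ 0 < r12 x /\ 0 < r13 x /\ 0 < r14 x /\ 0 < r23 x /\ 0 < r24 x /\ 0 < r34 x
  /\ exists lam mu : R, forall k : nat, (k < 6)%nat ->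
       partial (Upot m1 m2 m3 m4) k x
       = lam * partial (Imom m1 m2 m3 m4) k x + mu * partial Pcay k x.

(* At a critical point, Euler's identity for the homogeneous functions U, I, P
   gives U = -2 lam I - 2 mu P, so the multiplier lam of I is negative.  Rescaling by
   q = (-lam/M)^(1/3) turns the Lagrange equations into
     m_i m_j (s_ij^-2 - s_ij) = nu * dP/ds_ij,   P(s) = 0,
   which split into three pairs of opposite edges, (12,34), (14,23) with multiplier nu and
   (13,24) with multiplier -nu, each of the form al (a^-2 - a) = c b, be (b^-2 - b) = c a.
   Both coordinates of a solution of such a pair are nonincreasing in c.  Hence for two
   solutions with nu <= nu' the side products r12 r34, r14 r23 can only decrease and the
   diagonal product r13 r24 only increase, and P = 0 forces them to coincide; the
   normalization I = 1 then fixes the scale.  For existence, a pair is solved explicitly in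
   terms of t = c a b through the inverse of s |-> s^2 - 1/s, and the intermediate value
   theorem in the parameter of the diagonal pair achieves P = 0. *)

From Stdlib Require Import Reals Lra Lia Ranalysis5.
From Coquelicot Require Import Coquelicot.
Open Scope R_scope.

Lemma continuity_pt_inverse (F g : R -> R) (D : R -> Prop) y1 y y2 :
  (forall a b c, D a -> D c -> a <= b <= c -> D b) ->
  (forall a b, D a -> D b -> a < b -> F a < F b) ->
  (forall a, D a -> continuity_pt F a) ->
  (forall u, y1 <= u <= y2 -> D (g u) /\ F (g u) = u) ->
  y1 < y < y2 -> continuity_pt g y.
Proof.
  intros Dconv Fmono Fcont Hg Hy.
  assert (Fle : forall a b, D a -> D b -> F a <= F b -> a <= b).
  { intros a b Da Db Hab. destruct (Rle_lt_dec a b) as [H|H]; [exact H|].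
    pose proof (Fmono _ _ Db Da H); lra. }
  destruct (Hg y1) as [D1 F1]; [lra|]. destruct (Hg y2) as [D2 F2]; [lra|].
  assert (Dseg : forall a, g y1 <= a <= g y2 -> D a) by (intros a; exact (Dconv _ a _ D1 D2)).
  assert (Hlt : g y1 < g y2).
  { destruct (Rle_lt_or_eq_dec (g y1) (g y2)) as [H|H]; [apply Fle; auto; lra | exact H |].
    apply (f_equal F) in H. lra. }
  apply (continuity_pt_recip_interv F g (g y1) (g y2) Hlt); rewrite ?F1, ?F2.
  - intros a b Ha Hab Hb. apply Fmono; try apply Dseg; lra.
  - intros u Hu1 Hu2. unfold comp, id. apply Hg; lra.
  - intros u Hu1 Hu2. destruct (Hg u) as [Du Fu]; [lra|].
    split; apply Fle; try assumption; rewrite ?F1, ?F2, ?Fu; lra.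
  - intros a Ha. apply Fcont, Dseg, Ha.
  - exact Hy.
Qed.

Lemma continuous_of_abs_le (f : R -> R) x0 :
  (forall y, Rabs (f y - f x0) <= Rabs (y - x0)) -> continuous f x0.
Proof.
  intros Hf. apply filterlim_locally. intros eps. exists eps. intros y Hy.
  apply (Rle_lt_trans _ _ _ (Hf y)), Hy.
Qed.

Definition sq_sub_inv (s : R) : R := s ^ 2 - / s.

Lemma sq_sub_inv_lt x y : 0 < x -> x < y -> sq_sub_inv x < sq_sub_inv y.
Proof.
  intros Hx Hxy. unfold sq_sub_inv.
  assert (/ y < / x) by (apply Rinv_lt_contravar; nra).
  nra.
Qed.

Lemma sq_sub_inv_le x y : 0 < x -> x <= y -> sq_sub_inv x <= sq_sub_inv y.
Proof.
  intros Hx Hxy. destruct (Rle_lt_or_eq_dec _ _ Hxy) as [H|<-].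
  - apply Rlt_le, sq_sub_inv_lt; assumption.
  - apply Rle_refl.
Qed.

Lemma sq_sub_inv_1 : sq_sub_inv 1 = 0.
Proof. unfold sq_sub_inv. field. Qed.

Lemma sq_sub_inv_pos_gt_1 x : 0 < x -> 0 < sq_sub_inv x -> 1 < x.
Proof.
  intros Hx Hh. destruct (Rlt_le_dec 1 x) as [H|H]; [exact H|].
  pose proof (sq_sub_inv_le _ _ Hx H). rewrite sq_sub_inv_1 in *. lra.
Qed.

Lemma sq_sub_inv_continuous x : 0 < x -> continuity_pt sq_sub_inv x.
Proof.
  intros Hx. apply continuity_pt_filterlim, (ex_derive_continuous (V := R_NormedModule)).
  unfold sq_sub_inv. auto_derive. lra.
Qed.

Lemma sq_sub_inv_surj y : { s | 0 < s /\ sq_sub_inv s = y }.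
Proof.
  set (a := Rabs y + 2).
  assert (Ha : 2 <= a) by (pose proof (Rabs_pos y); unfold a; lra).
  assert (Hya : 2 - a <= y <= a - 2).
  { pose proof (Rle_abs y). pose proof (Rle_abs (- y)). rewrite Rabs_Ropp in *. unfold a; lra. }
  assert (Hia : 0 < / a <= / 2) by (split; [apply Rinv_0_lt_compat | apply Rinv_le_contravar]; lra).
  destruct (f_interv_is_interv sq_sub_inv (/ a) a y) as [s [Hs Hhs]].
  - lra.
  - unfold sq_sub_inv. rewrite Rinv_inv. split; nra.
  - intros z Hz. apply sq_sub_inv_continuous. lra.
  - exists s. split; [lra | exact Hhs].
Qed.

Definition sq_sub_inv_root (y : R) : R := proj1_sig (sq_sub_inv_surj y).

Lemma sq_sub_inv_root_pos y : 0 < sq_sub_inv_root y.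
Proof. exact (proj1 (proj2_sig (sq_sub_inv_surj y))). Qed.

Lemma sq_sub_inv_of_root y : sq_sub_inv (sq_sub_inv_root y) = y.
Proof. exact (proj2 (proj2_sig (sq_sub_inv_surj y))). Qed.

Lemma sq_sub_inv_root_le y s : 0 < s -> y <= sq_sub_inv s -> sq_sub_inv_root y <= s.
Proof.
  intros Hs Hy. destruct (Rle_lt_dec (sq_sub_inv_root y) s) as [H|H]; [exact H|].
  pose proof (sq_sub_inv_lt _ _ Hs H). rewrite sq_sub_inv_of_root in *. lra.
Qed.

Lemma sq_sub_inv_root_ge y s : 0 < s -> sq_sub_inv s <= y -> s <= sq_sub_inv_root y.
Proof.
  intros Hs Hy. destruct (Rle_lt_dec s (sq_sub_inv_root y)) as [H|H]; [exact H|].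
  pose proof (sq_sub_inv_lt _ _ (sq_sub_inv_root_pos y) H). rewrite sq_sub_inv_of_root in *. lra.
Qed.

Lemma sq_sub_inv_root_lt y z : y < z -> sq_sub_inv_root y < sq_sub_inv_root z.
Proof.
  intros Hyz. destruct (Rlt_le_dec (sq_sub_inv_root y) (sq_sub_inv_root z)) as [H|H]; [exact H|].
  pose proof (sq_sub_inv_le _ _ (sq_sub_inv_root_pos z) H). rewrite !sq_sub_inv_of_root in *. lra.
Qed.

Lemma sq_sub_inv_root_continuous y : continuous sq_sub_inv_root y.
Proof.
  apply continuity_pt_filterlim.
  apply (continuity_pt_inverse sq_sub_inv sq_sub_inv_root (fun s => 0 < s) (y - 1) y (y + 1)).
  - intros; lra.
  - intros; apply sq_sub_inv_lt; assumption.
  - exact sq_sub_inv_continuous.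
  - intros u _. split; [apply sq_sub_inv_root_pos | apply sq_sub_inv_of_root].
  - lra.
Qed.

Lemma sq_sub_inv_root_0 : sq_sub_inv_root 0 = 1.
Proof.
  apply Rle_antisym; [apply sq_sub_inv_root_le | apply sq_sub_inv_root_ge];
    rewrite ?sq_sub_inv_1; lra.
Qed.

Lemma sq_sub_inv_root_le_1 y : y <= 0 -> sq_sub_inv_root y <= 1.
Proof. intros Hy. apply sq_sub_inv_root_le; rewrite ?sq_sub_inv_1; lra. Qed.

Lemma sq_sub_inv_root_ge_2 y : 4 <= y -> 2 <= sq_sub_inv_root y.
Proof. intros Hy. apply sq_sub_inv_root_ge; unfold sq_sub_inv; [lra | field_simplify; lra]. Qed.

Definition pair_eq (al be c a b : R) : Prop :=
  al * (/ a ^ 2 - a) = c * b /\ be * (/ b ^ 2 - b) = c * a.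

Lemma pair_eq_sym al be c a b : pair_eq al be c a b -> pair_eq be al c b a.
Proof. intros [E1 E2]. split; assumption. Qed.

Lemma pair_eq_sq_sub_inv al be c a b : 0 < a -> pair_eq al be c a b ->
  al * sq_sub_inv a = - (c * (a * b)).
Proof.
  intros Ha [E _]. unfold sq_sub_inv.
  replace (al * (a ^ 2 - / a)) with (- (al * (/ a ^ 2 - a) * a)) by (field; lra).
  rewrite E. ring.
Qed.

Lemma pair_eq_sq al be c a b : 0 < a -> 0 < b -> pair_eq al be c a b ->
  al * be * ((1 - / a ^ 3) * (1 - / b ^ 3)) = c ^ 2.
Proof.
  intros Ha Hb [E1 E2].
  replace (al * be * ((1 - / a ^ 3) * (1 - / b ^ 3)))
    with (al * (/ a ^ 2 - a) * (be * (/ b ^ 2 - b)) / (a * b)) by (field; lra).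
  rewrite E1, E2. field. lra.
Qed.

Lemma inv_cube_gap_lt x y : 1 < x -> x < y -> 0 < 1 - / x ^ 3 < 1 - / y ^ 3.
Proof.
  intros Hx Hxy.
  assert (H1 : 1 < x ^ 3) by (simpl; nra).
  assert (H2 : x ^ 3 < y ^ 3) by (assert (x * x < y * y) by nra; simpl; nra).
  assert (/ x ^ 3 < 1) by (rewrite <- Rinv_1; apply Rinv_lt_contravar; lra).
  assert (/ y ^ 3 < / x ^ 3) by (apply Rinv_lt_contravar; nra).
  lra.
Qed.

Lemma pair_eq_antitone_l al be c c' a b a' b' :
  0 < al -> 0 < be -> 0 < a -> 0 < b -> 0 < a' -> 0 < b' -> c <= c' ->
  pair_eq al be c a b -> pair_eq al be c' a' b' -> a' <= a.
Proof.
  intros Hal Hbe Ha Hb Ha' Hb' Hc E E'.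
  destruct (Rle_lt_dec a' a) as [H|Haa]; [exact H | exfalso].
  pose proof (pair_eq_sq_sub_inv _ _ _ _ _ Ha E) as Eha.
  pose proof (pair_eq_sq_sub_inv _ _ _ _ _ Ha' E') as Eha'.
  pose proof (pair_eq_sq_sub_inv _ _ _ _ _ Hb (pair_eq_sym _ _ _ _ _ E)) as Ehb.
  pose proof (pair_eq_sq_sub_inv _ _ _ _ _ Hb' (pair_eq_sym _ _ _ _ _ E')) as Ehb'.
  assert (Hcab : c' * (a' * b') < c * (a * b)).
  { assert (al * sq_sub_inv a < al * sq_sub_inv a')
      by (apply Rmult_lt_compat_l, sq_sub_inv_lt; assumption).
    lra. }
  assert (Hbb : b < b').
  { destruct (Rlt_le_dec b b') as [H|H]; [exact H|].
    assert (be * sq_sub_inv b' <= be * sq_sub_inv b)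
      by (apply Rmult_le_compat_l, sq_sub_inv_le; lra).
    lra. }
  destruct (Rle_lt_dec 0 c) as [Hc0|Hc0].
  { assert (a * b < a' * b') by nra.
    assert (c * (a * b) <= c * (a' * b')) by (apply Rmult_le_compat_l; lra).
    assert (c * (a' * b') <= c' * (a' * b')) by (apply Rmult_le_compat_r; nra).
    lra. }
  (* for [c < 0] both solutions lie beyond 1, where the product identity is monotone *)
  assert (Hcab0 : c * (a * b) < 0) by (apply Rmult_neg_pos; nra).
  assert (Ha1 : 1 < a) by (apply sq_sub_inv_pos_gt_1, (Rmult_lt_reg_l al); lra).
  assert (Hb1 : 1 < b) by (apply sq_sub_inv_pos_gt_1, (Rmult_lt_reg_l be); nra).
  assert (Hc' : c' < 0).
  { destruct (Rlt_le_dec c' 0) as [H|H]; [exact H|].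
    assert (0 <= c' * (a' * b')) by (apply Rmult_le_pos; nra). lra. }
  pose proof (inv_cube_gap_lt _ _ Ha1 Haa) as Ga.
  pose proof (inv_cube_gap_lt _ _ Hb1 Hbb) as Gb.
  pose proof (pair_eq_sq _ _ _ _ _ Ha Hb E) as Sq.
  pose proof (pair_eq_sq _ _ _ _ _ Ha' Hb' E') as Sq'.
  set (ga := 1 - / a ^ 3) in *. set (gb := 1 - / b ^ 3) in *.
  set (ga' := 1 - / a' ^ 3) in *. set (gb' := 1 - / b' ^ 3) in *.
  assert (ga * gb < ga' * gb') by nra.
  assert (al * be * (ga * gb) < al * be * (ga' * gb')) by (apply Rmult_lt_compat_l; nra).
  nra.
Qed.

Lemma pair_eq_antitone al be c c' a b a' b' :
  0 < al -> 0 < be -> 0 < a -> 0 < b -> 0 < a' -> 0 < b' -> c <= c' ->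
  pair_eq al be c a b -> pair_eq al be c' a' b' -> a' <= a /\ b' <= b.
Proof.
  intros. split.
  - apply (pair_eq_antitone_l al be c c' a b a' b'); assumption.
  - apply (pair_eq_antitone_l be al c c' b a b' a'); try apply pair_eq_sym; assumption.
Qed.

(* A pair is solved in terms of [t = c a b]: its equations become [sq_sub_inv a = - t / al]
   and [sq_sub_inv b = - t / be], and then [c = t / (a b)]. *)
Definition pair_a (al t : R) : R := sq_sub_inv_root (- t / al).

Definition pair_prod (al be t : R) : R := pair_a al t * pair_a be t.

Definition pair_c (al be t : R) : R := t / pair_prod al be t.

Lemma pair_a_pos al t : 0 < pair_a al t.
Proof. apply sq_sub_inv_root_pos. Qed.

Lemma pair_prod_pos al be t : 0 < pair_prod al be t.
Proof. apply Rmult_lt_0_compat; apply pair_a_pos. Qed.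

Lemma pair_a_0 al : pair_a al 0 = 1.
Proof. unfold pair_a. rewrite Ropp_0, Rdiv_0_l. exact sq_sub_inv_root_0. Qed.

Lemma pair_a_le_1 al t : 0 < al -> 0 <= t -> pair_a al t <= 1.
Proof.
  intros Hal Ht. apply sq_sub_inv_root_le_1. unfold Rdiv.
  assert (0 <= t * / al) by (apply Rmult_le_pos; [|apply Rlt_le, Rinv_0_lt_compat]; lra). lra.
Qed.

Lemma pair_a_spec al t : 0 < al -> al * (/ pair_a al t ^ 2 - pair_a al t) = t / pair_a al t.
Proof.
  intros Hal. pose proof (sq_sub_inv_of_root (- t / al)) as E. pose proof (pair_a_pos al t).
  unfold pair_a, sq_sub_inv in *. set (a := sq_sub_inv_root (- t / al)) in *.
  replace (al * (/ a ^ 2 - a)) with (- (al * (a ^ 2 - / a)) / a) by (field; lra).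
  rewrite E. field. lra.
Qed.

Lemma pair_eq_pair_c al be t : 0 < al -> 0 < be ->
  pair_eq al be (pair_c al be t) (pair_a al t) (pair_a be t).
Proof.
  intros Hal Hbe. pose proof (pair_a_pos al t). pose proof (pair_a_pos be t).
  unfold pair_c, pair_prod. split; rewrite pair_a_spec by assumption; field; lra.
Qed.

Lemma pair_c_lt al be t u : 0 < al -> 0 < be -> t < u -> pair_c al be t < pair_c al be u.
Proof.
  intros Hal Hbe Htu. destruct (Rlt_le_dec (pair_c al be t) (pair_c al be u)) as [H|H]; [exact H|].
  destruct (pair_eq_antitone al be _ _ _ _ _ _ Hal Hbe (pair_a_pos al u) (pair_a_pos be u)
              (pair_a_pos al t) (pair_a_pos be t) H (pair_eq_pair_c al be u Hal Hbe)
              (pair_eq_pair_c al be t Hal Hbe)) as [Hle _].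
  assert (pair_a al u < pair_a al t).
  { apply sq_sub_inv_root_lt. unfold Rdiv.
    apply Rmult_lt_compat_r; [apply Rinv_0_lt_compat|]; lra. }
  lra.
Qed.

Lemma pair_c_0 al be : pair_c al be 0 = 0.
Proof. apply Rdiv_0_l. Qed.

Lemma pair_c_ge al be t : 0 < al -> 0 < be -> 0 <= t -> t <= pair_c al be t.
Proof.
  intros Hal Hbe Ht. pose proof (pair_prod_pos al be t) as Hp.
  assert (pair_prod al be t <= 1).
  { unfold pair_prod. pose proof (pair_a_le_1 al t Hal Ht). pose proof (pair_a_le_1 be t Hbe Ht).
    pose proof (pair_a_pos al t). pose proof (pair_a_pos be t). nra. }
  unfold pair_c. apply (Rmult_le_reg_r (pair_prod al be t)); [exact Hp|].
  unfold Rdiv. rewrite Rmult_assoc, Rinv_l by lra. nra.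
Qed.

Lemma pair_c_nonpos al be t : t <= 0 -> pair_c al be t <= 0.
Proof.
  intros Ht. pose proof (pair_prod_pos al be t).
  unfold pair_c, Rdiv. assert (0 < / pair_prod al be t) by (apply Rinv_0_lt_compat; lra). nra.
Qed.

Lemma pair_a_continuous al t : continuous (pair_a al) t.
Proof.
  apply (continuous_comp (fun t => - t / al) sq_sub_inv_root); [|apply sq_sub_inv_root_continuous].
  apply (ex_derive_continuous (V := R_NormedModule)). auto_derive. exact I.
Qed.

Lemma pair_prod_continuous al be t : continuous (pair_prod al be) t.
Proof. apply (continuous_mult (pair_a al) (pair_a be)); apply pair_a_continuous. Qed.

Lemma pair_c_continuous al be t : continuous (pair_c al be) t.
Proof.
  apply (continuous_mult (fun t => t) (fun t => / pair_prod al be t)); [apply continuous_id|].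
  apply continuous_Rinv_comp; [apply pair_prod_continuous|].
  apply Rgt_not_eq, pair_prod_pos.
Qed.

(* [pair_c] is an increasing bijection of [[0, +oo)]; its inverse takes the junk value [0]
   for [y <= 0], and also when [al] or [be] is not positive. *)
Lemma pair_c_surj al be y :
  { t | 0 <= t /\ (y <= 0 -> t = 0) /\ (0 < al -> 0 < be -> 0 <= y -> pair_c al be t = y) }.
Proof.
  destruct (Rle_lt_dec y 0) as [Hy|Hy].
  { exists 0. repeat split; [lra|]. intros _ _ Hy'. rewrite pair_c_0. lra. }
  destruct (Rlt_dec 0 al) as [Hal|Hal]; [destruct (Rlt_dec 0 be) as [Hbe|Hbe]|].
  - destruct (f_interv_is_interv (pair_c al be) 0 y y Hy) as [t [Ht E]].
    + rewrite pair_c_0. split; [lra | apply pair_c_ge; lra].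
    + intros z _. apply continuity_pt_filterlim, pair_c_continuous.
    + exists t. repeat split; intros; lra.
  - exists 0. repeat split; intros; lra.
  - exists 0. repeat split; intros; lra.
Qed.

Definition pair_c_inv (al be y : R) : R := proj1_sig (pair_c_surj al be y).

Lemma pair_c_inv_nonneg al be y : 0 <= pair_c_inv al be y.
Proof. exact (proj1 (proj2_sig (pair_c_surj al be y))). Qed.

Lemma pair_c_inv_nonpos al be y : y <= 0 -> pair_c_inv al be y = 0.
Proof. exact (proj1 (proj2 (proj2_sig (pair_c_surj al be y)))). Qed.

Lemma pair_c_pair_c_inv al be y : 0 < al -> 0 < be -> 0 <= y ->
  pair_c al be (pair_c_inv al be y) = y.
Proof. exact (proj2 (proj2 (proj2_sig (pair_c_surj al be y)))). Qed.

Lemma pair_c_inv_continuous al be y : 0 < al -> 0 < be -> 0 <= y -> continuous (pair_c_inv al be) y.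
Proof.
  intros Hal Hbe Hy. destruct (Rle_lt_or_eq_dec _ _ Hy) as [Hy0|<-].
  - apply continuity_pt_filterlim.
    apply (continuity_pt_inverse (pair_c al be) _ (fun t => 0 <= t) (y / 2) y (2 * y)).
    + intros; lra.
    + intros; apply pair_c_lt; assumption.
    + intros a _. apply continuity_pt_filterlim, pair_c_continuous.
    + intros u Hu. split; [apply pair_c_inv_nonneg | apply pair_c_pair_c_inv; lra].
    + lra.
  - (* at [0] the inverse is squeezed: [0 <= pair_c_inv y <= max y 0] *)
    apply continuous_of_abs_le. intros z.
    rewrite (pair_c_inv_nonpos al be 0), !Rminus_0_r by lra.
    destruct (Rle_lt_dec z 0) as [Hz|Hz].
    + rewrite pair_c_inv_nonpos by exact Hz. rewrite Rabs_R0. apply Rabs_pos.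
    + pose proof (pair_c_ge al be (pair_c_inv al be z) Hal Hbe (pair_c_inv_nonneg al be z)).
      rewrite pair_c_pair_c_inv in H by lra. pose proof (pair_c_inv_nonneg al be z).
      rewrite !Rabs_right; lra.
Qed.

Definition conf_pos (x : conf) : Prop :=
  0 < r12 x /\ 0 < r13 x /\ 0 < r14 x /\ 0 < r23 x /\ 0 < r24 x /\ 0 < r34 x.

Definition reduced_crit (p12 p13 p14 p23 p24 p34 nu : R) (s : conf) : Prop :=
  conf_pos s /\ Pcay s = 0 /\
  pair_eq p12 p34 nu (r12 s) (r34 s) /\ pair_eq p14 p23 nu (r14 s) (r23 s) /\
  pair_eq p13 p24 (- nu) (r13 s) (r24 s).

Lemma reduced_crit_unique_le p12 p13 p14 p23 p24 p34 nu nu' s s' :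
  0 < p12 -> 0 < p13 -> 0 < p14 -> 0 < p23 -> 0 < p24 -> 0 < p34 -> nu <= nu' ->
  reduced_crit p12 p13 p14 p23 p24 p34 nu s -> reduced_crit p12 p13 p14 p23 p24 p34 nu' s' ->
  s = s'.
Proof.
  intros H12 H13 H14 H23 H24 H34 Hnu
    [(S1 & S2 & S3 & S4 & S5 & S6) [P [E1 [E2 E3]]]]
    [(S1' & S2' & S3' & S4' & S5' & S6') [P' [E1' [E2' E3']]]].
  destruct (pair_eq_antitone _ _ _ _ _ _ _ _ H12 H34 S1 S6 S1' S6' Hnu E1 E1') as [L1 L6].
  destruct (pair_eq_antitone _ _ _ _ _ _ _ _ H14 H23 S3 S4 S3' S4' Hnu E2 E2') as [L3 L4].
  destruct (pair_eq_antitone _ _ _ _ _ _ _ _ H13 H24 S2' S5' S2 S5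
              (Ropp_le_contravar _ _ Hnu) E3' E3) as [L2 L5].
  unfold Pcay in P, P'.
  destruct s as [a1 a2 a3 a4 a5 a6], s' as [b1 b2 b3 b4 b5 b6]; simpl in *.
  (* the side products can only shrink and the diagonal one only grow, so all are equal *)
  assert (X1 : b1 * b6 <= a1 * a6) by nra.
  assert (X2 : b3 * b4 <= a3 * a4) by nra.
  assert (X3 : a2 * a5 <= b2 * b5) by nra.
  assert (Y1 : b1 * b6 = a1 * a6) by lra.
  assert (Y2 : b3 * b4 = a3 * a4) by lra.
  assert (Y3 : b2 * b5 = a2 * a5) by lra.
  f_equal; nra.
Qed.

Lemma reduced_crit_unique p12 p13 p14 p23 p24 p34 nu nu' s s' :
  0 < p12 -> 0 < p13 -> 0 < p14 -> 0 < p23 -> 0 < p24 -> 0 < p34 ->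
  reduced_crit p12 p13 p14 p23 p24 p34 nu s -> reduced_crit p12 p13 p14 p23 p24 p34 nu' s' ->
  s = s'.
Proof.
  intros H12 H13 H14 H23 H24 H34 Hs Hs'.
  destruct (Rle_lt_dec nu nu') as [H|H].
  - apply (reduced_crit_unique_le p12 p13 p14 p23 p24 p34 nu nu'); assumption.
  - symmetry. apply (reduced_crit_unique_le p12 p13 p14 p23 p24 p34 nu' nu); (assumption || lra).
Qed.

Definition side_prod (al be nu : R) : R := pair_prod al be (pair_c_inv al be nu).

(* The diagonal pair is parametrized by [t <= 0]; its multiplier [nu = - pair_c p13 p24 t]
   then fixes both side pairs, and Ptolemy's relation becomes [ptolemy_gap t = 0]. *)
Definition ptolemy_gap (p12 p13 p14 p23 p24 p34 t : R) : R :=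
  side_prod p12 p34 (- pair_c p13 p24 t) + side_prod p14 p23 (- pair_c p13 p24 t)
  - pair_prod p13 p24 t.

Lemma side_prod_le_1 al be nu : 0 < al -> 0 < be -> side_prod al be nu <= 1.
Proof.
  intros Hal Hbe. unfold side_prod, pair_prod.
  pose proof (pair_c_inv_nonneg al be nu) as Ht.
  pose proof (pair_a_le_1 al _ Hal Ht). pose proof (pair_a_le_1 be _ Hbe Ht).
  pose proof (pair_a_pos al (pair_c_inv al be nu)). nra.
Qed.

Lemma side_prod_continuous al be nu : 0 < al -> 0 < be -> 0 <= nu ->
  continuous (side_prod al be) nu.
Proof.
  intros Hal Hbe Hnu. apply (continuous_comp (pair_c_inv al be) (pair_prod al be)).
  - apply pair_c_inv_continuous; assumption.
  - apply pair_prod_continuous.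
Qed.

Lemma ptolemy_gap_0 p12 p13 p14 p23 p24 p34 : ptolemy_gap p12 p13 p14 p23 p24 p34 0 = 1.
Proof.
  unfold ptolemy_gap, side_prod, pair_prod.
  rewrite pair_c_0, Ropp_0, !pair_c_inv_nonpos, !pair_a_0 by lra. ring.
Qed.

Lemma ptolemy_gap_far p12 p13 p14 p23 p24 p34 :
  0 < p12 -> 0 < p13 -> 0 < p14 -> 0 < p23 -> 0 < p24 -> 0 < p34 ->
  ptolemy_gap p12 p13 p14 p23 p24 p34 (- (4 * (p13 + p24))) < 0.
Proof.
  intros H12 H13 H14 H23 H24 H34.
  assert (Hdiag : forall al, 0 < al -> al <= p13 + p24 -> 2 <= pair_a al (- (4 * (p13 + p24)))).
  { intros al Hal Hle. apply sq_sub_inv_root_ge_2. rewrite Ropp_involutive.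
    apply (Rmult_le_reg_r al); [exact Hal|]. unfold Rdiv. rewrite Rmult_assoc, Rinv_l; lra. }
  pose proof (Hdiag p13 H13 ltac:(lra)). pose proof (Hdiag p24 H24 ltac:(lra)).
  pose proof (side_prod_le_1 p12 p34 (- pair_c p13 p24 (- (4 * (p13 + p24)))) H12 H34).
  pose proof (side_prod_le_1 p14 p23 (- pair_c p13 p24 (- (4 * (p13 + p24)))) H14 H23).
  unfold ptolemy_gap, pair_prod. nra.
Qed.

Lemma ptolemy_gap_continuous p12 p13 p14 p23 p24 p34 t :
  0 < p12 -> 0 < p14 -> 0 < p23 -> 0 < p34 -> t <= 0 ->
  continuous (ptolemy_gap p12 p13 p14 p23 p24 p34) t.
Proof.
  intros H12 H14 H23 H34 Ht.
  assert (Hnu : 0 <= - pair_c p13 p24 t) by (pose proof (pair_c_nonpos p13 p24 t Ht); lra).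
  assert (Hc : continuous (fun t => - pair_c p13 p24 t) t)
    by apply (continuous_opp (pair_c p13 p24)), pair_c_continuous.
  apply (continuous_minus (fun t => side_prod p12 p34 (- pair_c p13 p24 t)
                                    + side_prod p14 p23 (- pair_c p13 p24 t)) (pair_prod p13 p24));
    [|apply pair_prod_continuous].
  apply (continuous_plus (fun t => side_prod p12 p34 (- pair_c p13 p24 t))
                         (fun t => side_prod p14 p23 (- pair_c p13 p24 t)));
    apply (continuous_comp (fun t => - pair_c p13 p24 t)); auto using side_prod_continuous.
Qed.

Lemma reduced_crit_exists p12 p13 p14 p23 p24 p34 :
  0 < p12 -> 0 < p13 -> 0 < p14 -> 0 < p23 -> 0 < p24 -> 0 < p34 ->
  exists nu s, reduced_crit p12 p13 p14 p23 p24 p34 nu s.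
Proof.
  intros H12 H13 H14 H23 H24 H34.
  destruct (f_interv_is_interv (ptolemy_gap p12 p13 p14 p23 p24 p34) (- (4 * (p13 + p24))) 0 0)
    as [t [Ht Gt]].
  - lra.
  - rewrite ptolemy_gap_0. pose proof (ptolemy_gap_far _ _ _ _ _ _ H12 H13 H14 H23 H24 H34). lra.
  - intros t Ht. apply continuity_pt_filterlim, ptolemy_gap_continuous; (assumption || lra).
  - set (nu := - pair_c p13 p24 t).
    assert (Hnu : 0 <= nu) by (pose proof (pair_c_nonpos p13 p24 t ltac:(lra)); unfold nu; lra).
    set (t1 := pair_c_inv p12 p34 nu). set (t2 := pair_c_inv p14 p23 nu).
    exists nu, (mkconf (pair_a p12 t1) (pair_a p13 t) (pair_a p14 t2)
                  (pair_a p23 t2) (pair_a p24 t) (pair_a p34 t1)).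
    split; [repeat split; apply pair_a_pos|].
    split.
    { unfold Pcay; simpl. unfold ptolemy_gap, side_prod, pair_prod in Gt.
      fold nu t1 t2 in Gt. lra. }
    simpl. split; [|split].
    + rewrite <- (pair_c_pair_c_inv p12 p34 nu) by assumption. apply pair_eq_pair_c; assumption.
    + rewrite <- (pair_c_pair_c_inv p14 p23 nu) by assumption. apply pair_eq_pair_c; assumption.
    + unfold nu. rewrite Ropp_involutive. apply pair_eq_pair_c; assumption.
Qed.

Definition edge_mass (m1 m2 m3 m4 : R) (k : nat) : R :=
  match k with
  | 0%nat => m1 * m2 | 1%nat => m1 * m3 | 2%nat => m1 * m4
  | 3%nat => m2 * m3 | 4%nat => m2 * m4 | _ => m3 * m4
  end.

Definition grad_Pcay (k : nat) (x : conf) : R :=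
  match k with
  | 0%nat => r34 x | 1%nat => - r24 x | 2%nat => r23 x
  | 3%nat => r14 x | 4%nat => - r13 x | _ => r12 x
  end.

Lemma partial_Upot_eq m1 m2 m3 m4 k x : coord k x <> 0 ->
  partial (Upot m1 m2 m3 m4) k x = - edge_mass m1 m2 m3 m4 k / coord k x ^ 2.
Proof.
  intros Hx. destruct k as [|[|[|[|[|k]]]]]; unfold partial, Upot; cbn in *;
    apply is_derive_unique; auto_derive; auto; field; auto.
Qed.

Lemma partial_Imom_eq m1 m2 m3 m4 k x : 0 < Mtot m1 m2 m3 m4 ->
  partial (Imom m1 m2 m3 m4) k x = edge_mass m1 m2 m3 m4 k * coord k x / Mtot m1 m2 m3 m4.
Proof.
  intros HM. destruct k as [|[|[|[|[|k]]]]]; unfold partial, Imom; cbn;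
    apply is_derive_unique; auto_derive; auto; field; lra.
Qed.

Lemma partial_Pcay_eq k x : partial Pcay k x = grad_Pcay k x.
Proof.
  destruct k as [|[|[|[|[|k]]]]]; unfold partial, Pcay; cbn;
    apply is_derive_unique; auto_derive; auto; ring.
Qed.

Definition edge_eq (M p lam mu r D : R) : Prop := - p / r ^ 2 = lam * (p * r / M) + mu * D.

Definition lagrange_sys (m1 m2 m3 m4 lam mu : R) (x : conf) : Prop :=
  forall k, (k < 6)%nat ->
    edge_eq (Mtot m1 m2 m3 m4) (edge_mass m1 m2 m3 m4 k) lam mu (coord k x) (grad_Pcay k x).

Lemma conf_pos_coord x k : conf_pos x -> 0 < coord k x.
Proof. intros (S1 & S2 & S3 & S4 & S5 & S6). destruct k as [|[|[|[|[|k]]]]]; assumption. Qed.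

Lemma lagrange_sys_iff m1 m2 m3 m4 lam mu x : 0 < Mtot m1 m2 m3 m4 -> conf_pos x ->
  (forall k : nat, (k < 6)%nat ->
     partial (Upot m1 m2 m3 m4) k x
     = lam * partial (Imom m1 m2 m3 m4) k x + mu * partial Pcay k x)
  <-> lagrange_sys m1 m2 m3 m4 lam mu x.
Proof.
  intros HM Hx. unfold lagrange_sys, edge_eq.
  split; intros H k Hk; specialize (H k Hk);
    rewrite partial_Upot_eq, partial_Imom_eq, partial_Pcay_eq in *;
    try (apply Rgt_not_eq, conf_pos_coord); assumption.
Qed.

Lemma edge_eq_scale M p r D q nu : 0 < M -> 0 < q -> 0 < r ->
  edge_eq M p (- (q ^ 3 * M)) (- (nu * q ^ 3)) r D <-> p * (/ (q * r) ^ 2 - q * r) = nu * (q * D).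
Proof.
  intros HM Hq Hr. unfold edge_eq. split; intros E.
  - apply (Rmult_eq_reg_l (- q ^ 2)); [|apply Rlt_not_eq; nra].
    replace (- q ^ 2 * (p * (/ (q * r) ^ 2 - q * r))) with (- p / r ^ 2 + q ^ 3 * p * r)
      by (field; lra).
    rewrite E. field. lra.
  - replace (- p / r ^ 2) with (- q ^ 2 * (p * (/ (q * r) ^ 2 - q * r)) - q ^ 3 * p * r)
      by (field; lra).
    rewrite E. field. lra.
Qed.

Definition scale (q : R) (x : conf) : conf :=
  mkconf (q * r12 x) (q * r13 x) (q * r14 x) (q * r23 x) (q * r24 x) (q * r34 x).

Lemma lagrange_sys_scale_iff m1 m2 m3 m4 q nu x :
  0 < Mtot m1 m2 m3 m4 -> 0 < q -> conf_pos x ->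
  lagrange_sys m1 m2 m3 m4 (- (q ^ 3 * Mtot m1 m2 m3 m4)) (- (nu * q ^ 3)) x <->
  let s := scale q x in
  pair_eq (m1 * m2) (m3 * m4) nu (r12 s) (r34 s) /\
  pair_eq (m1 * m4) (m2 * m3) nu (r14 s) (r23 s) /\
  pair_eq (m1 * m3) (m2 * m4) (- nu) (r13 s) (r24 s).
Proof.
  intros HM Hq Hx. unfold lagrange_sys, pair_eq; cbn.
  assert (Ek : forall k, edge_eq (Mtot m1 m2 m3 m4) (edge_mass m1 m2 m3 m4 k)
                   (- (q ^ 3 * Mtot m1 m2 m3 m4)) (- (nu * q ^ 3)) (coord k x) (grad_Pcay k x) <->
                 edge_mass m1 m2 m3 m4 k * (/ (q * coord k x) ^ 2 - q * coord k x)
                 = nu * (q * grad_Pcay k x))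
    by (intros k; apply edge_eq_scale, conf_pos_coord; assumption).
  split.
  - intros H. pose proof (fun k Hk => proj1 (Ek k) (H k Hk)) as E.
    pose proof (E 0%nat ltac:(lia)). pose proof (E 1%nat ltac:(lia)).
    pose proof (E 2%nat ltac:(lia)). pose proof (E 3%nat ltac:(lia)).
    pose proof (E 4%nat ltac:(lia)). pose proof (E 5%nat ltac:(lia)).
    cbn in *. repeat split; lra.
  - intros ((E12 & E34) & (E14 & E23) & (E13 & E24)) k Hk. apply Ek.
    destruct k as [|[|[|[|[|[|k]]]]]]; cbn; try lra; lia.
Qed.

Lemma edge_eq_mul_r M p lam mu r D : 0 < M -> 0 < r -> edge_eq M p lam mu r D ->
  p / r = - lam * (p * r ^ 2 / M) - mu * (D * r).
Proof.
  intros HM Hr E. unfold edge_eq in E.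
  replace (p / r) with (- (- p / r ^ 2) * r) by (field; lra).
  rewrite E. field. lra.
Qed.

Lemma lagrange_sys_euler m1 m2 m3 m4 lam mu x : 0 < Mtot m1 m2 m3 m4 -> conf_pos x ->
  lagrange_sys m1 m2 m3 m4 lam mu x ->
  Upot m1 m2 m3 m4 x = - 2 * lam * Imom m1 m2 m3 m4 x - 2 * mu * Pcay x.
Proof.
  intros HM Hx H.
  assert (E : forall k, (k < 6)%nat -> edge_mass m1 m2 m3 m4 k / coord k x =
            - lam * (edge_mass m1 m2 m3 m4 k * coord k x ^ 2 / Mtot m1 m2 m3 m4)
            - mu * (grad_Pcay k x * coord k x))
    by (intros k Hk; apply edge_eq_mul_r, H; [assumption | apply conf_pos_coord | ]; assumption).
  pose proof (E 0%nat ltac:(lia)) as E0. pose proof (E 1%nat ltac:(lia)) as E1.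
  pose proof (E 2%nat ltac:(lia)) as E2. pose proof (E 3%nat ltac:(lia)) as E3.
  pose proof (E 4%nat ltac:(lia)) as E4. pose proof (E 5%nat ltac:(lia)) as E5.
  cbn in E0, E1, E2, E3, E4, E5. unfold Upot.
  rewrite E0, E1, E2, E3, E4, E5. unfold Imom, Pcay. field. lra.
Qed.

Lemma Upot_pos m1 m2 m3 m4 x : 0 < m1 -> 0 < m2 -> 0 < m3 -> 0 < m4 -> conf_pos x ->
  0 < Upot m1 m2 m3 m4 x.
Proof.
  intros H1 H2 H3 H4 (S1 & S2 & S3 & S4 & S5 & S6). unfold Upot.
  repeat apply Rplus_lt_0_compat; apply Rdiv_lt_0_compat; nra.
Qed.

Lemma Imom_pos m1 m2 m3 m4 x : 0 < m1 -> 0 < m2 -> 0 < m3 -> 0 < m4 -> conf_pos x ->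
  0 < Imom m1 m2 m3 m4 x.
Proof.
  intros H1 H2 H3 H4 (S1 & S2 & S3 & S4 & S5 & S6). unfold Imom, Mtot.
  apply Rmult_lt_0_compat; [apply Rinv_0_lt_compat; lra|].
  repeat apply Rplus_lt_0_compat; apply Rmult_lt_0_compat; nra.
Qed.

Lemma lagrange_mult_neg m1 m2 m3 m4 lam mu x :
  0 < m1 -> 0 < m2 -> 0 < m3 -> 0 < m4 -> conf_pos x ->
  Imom m1 m2 m3 m4 x = 1 -> Pcay x = 0 -> lagrange_sys m1 m2 m3 m4 lam mu x -> lam < 0.
Proof.
  intros H1 H2 H3 H4 Hx HI HP H.
  assert (HM : 0 < Mtot m1 m2 m3 m4) by (unfold Mtot; lra).
  pose proof (lagrange_sys_euler _ _ _ _ _ _ _ HM Hx H) as E.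
  pose proof (Upot_pos _ _ _ _ _ H1 H2 H3 H4 Hx).
  rewrite HI, HP in E. lra.
Qed.

Lemma scale_pos q x : 0 < q -> conf_pos x -> conf_pos (scale q x).
Proof. intros Hq (S1 & S2 & S3 & S4 & S5 & S6). repeat split; simpl; nra. Qed.

Lemma scale_inv q x : q <> 0 -> scale (/ q) (scale q x) = x.
Proof. intros Hq. destruct x. unfold scale; simpl. f_equal; field; exact Hq. Qed.

Lemma Imom_scale m1 m2 m3 m4 q x : Imom m1 m2 m3 m4 (scale q x) = q ^ 2 * Imom m1 m2 m3 m4 x.
Proof. unfold Imom, scale; simpl. ring. Qed.

Lemma Pcay_scale q x : Pcay (scale q x) = q ^ 2 * Pcay x.
Proof. unfold Pcay, scale; simpl. ring. Qed.

Lemma cube_root_ex c : 0 < c -> exists q, 0 < q /\ q ^ 3 = c.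
Proof.
  intros Hc. exists (Rpower c (1 / 3)). split; [apply exp_pos|].
  rewrite <- Rpower_pow by apply exp_pos.
  rewrite Rpower_mult. replace (1 / 3 * INR 3) with 1 by (simpl; field). apply Rpower_1, Hc.
Qed.

Lemma reduced_of_critical_point m1 m2 m3 m4 x :
  0 < m1 -> 0 < m2 -> 0 < m3 -> 0 < m4 -> critical_point m1 m2 m3 m4 x ->
  exists q nu, 0 < q /\
    reduced_crit (m1 * m2) (m1 * m3) (m1 * m4) (m2 * m3) (m2 * m4) (m3 * m4) nu (scale q x).
Proof.
  intros H1 H2 H3 H4
    [(_ & _ & _ & _ & _ & _ & HI & HP) (S1 & S2 & S3 & S4 & S5 & S6 & lam & mu & H)].
  assert (Hx : conf_pos x) by (repeat split; assumption).
  assert (HM : 0 < Mtot m1 m2 m3 m4) by (unfold Mtot; lra).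
  apply lagrange_sys_iff in H; [|assumption..].
  pose proof (lagrange_mult_neg _ _ _ _ _ _ _ H1 H2 H3 H4 Hx HI HP H) as Hlam.
  destruct (cube_root_ex (- lam / Mtot m1 m2 m3 m4)) as [q [Hq Hq3]].
  { apply Rdiv_lt_0_compat; lra. }
  exists q, (- mu / q ^ 3).
  replace lam with (- (q ^ 3 * Mtot m1 m2 m3 m4)) in H by (rewrite Hq3; field; lra).
  replace mu with (- (- mu / q ^ 3 * q ^ 3)) in H by (field; lra).
  apply lagrange_sys_scale_iff in H; [|assumption..].
  split; [exact Hq|]. split; [apply scale_pos; assumption|].
  split; [rewrite Pcay_scale, HP; ring | exact H].
Qed.

Lemma critical_point_of_reduced m1 m2 m3 m4 nu s :
  0 < m1 -> 0 < m2 -> 0 < m3 -> 0 < m4 ->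
  reduced_crit (m1 * m2) (m1 * m3) (m1 * m4) (m2 * m3) (m2 * m4) (m3 * m4) nu s ->
  critical_point m1 m2 m3 m4 (scale (/ sqrt (Imom m1 m2 m3 m4 s)) s).
Proof.
  intros H1 H2 H3 H4 [Hs [HP Hpairs]].
  assert (HM : 0 < Mtot m1 m2 m3 m4) by (unfold Mtot; lra).
  pose proof (Imom_pos _ _ _ _ _ H1 H2 H3 H4 Hs) as HI.
  set (k := sqrt (Imom m1 m2 m3 m4 s)).
  assert (Hk : 0 < k) by (apply sqrt_lt_R0, HI).
  assert (Hk2 : k ^ 2 = Imom m1 m2 m3 m4 s) by (rewrite <- Rsqr_pow2; apply Rsqr_sqrt; lra).
  assert (Hx : conf_pos (scale (/ k) s))
    by (apply scale_pos; [apply Rinv_0_lt_compat|]; assumption).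
  assert (Hks : scale k (scale (/ k) s) = s)
    by (rewrite <- (Rinv_inv k) at 1; apply scale_inv, Rinv_neq_0_compat; lra).
  destruct Hx as (S1 & S2 & S3 & S4 & S5 & S6).
  split; [repeat split; try lra|].
  - rewrite Imom_scale, <- Hk2. field. lra.
  - rewrite Pcay_scale, HP. ring.
  - repeat split; try assumption.
    exists (- (k ^ 3 * Mtot m1 m2 m3 m4)), (- (nu * k ^ 3)).
    apply lagrange_sys_iff; [assumption | repeat split; assumption |].
    apply lagrange_sys_scale_iff; [assumption.. | repeat split; assumption |].
    cbv zeta. rewrite Hks. exact Hpairs.
Qed.

Lemma scale_eq_normalized m1 m2 m3 m4 q q' x y : 0 < q -> 0 < q' ->
  Imom m1 m2 m3 m4 x = 1 -> Imom m1 m2 m3 m4 y = 1 -> scale q x = scale q' y -> x = y.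
Proof.
  intros Hq Hq' Hx Hy E.
  assert (q = q').
  { pose proof (f_equal (Imom m1 m2 m3 m4) E) as EI.
    rewrite !Imom_scale, Hx, Hy in EI. nra. }
  subst q'. rewrite <- (scale_inv q x), <- (scale_inv q y), E by lra. reflexivity.
Qed.

Theorem lemma6 (m1 m2 m3 m4 : R) :
  0 < m1 -> 0 < m2 -> 0 < m3 -> 0 < m4 ->
  exists! x : conf, critical_point m1 m2 m3 m4 x.
Proof.
  intros H1 H2 H3 H4.
  pose proof (Rmult_lt_0_compat _ _ H1 H2) as H12. pose proof (Rmult_lt_0_compat _ _ H1 H3) as H13.
  pose proof (Rmult_lt_0_compat _ _ H1 H4) as H14. pose proof (Rmult_lt_0_compat _ _ H2 H3) as H23.
  pose proof (Rmult_lt_0_compat _ _ H2 H4) as H24. pose proof (Rmult_lt_0_compat _ _ H3 H4) as H34.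
  apply (unique_existence (critical_point m1 m2 m3 m4)). split.
  - destruct (reduced_crit_exists _ _ _ _ _ _ H12 H13 H14 H23 H24 H34) as (nu & s & Hs).
    eexists. exact (critical_point_of_reduced _ _ _ _ _ _ H1 H2 H3 H4 Hs).
  - intros x y Hx Hy.
    destruct (reduced_of_critical_point _ _ _ _ _ H1 H2 H3 H4 Hx) as (q & nu & Hq & Rx).
    destruct (reduced_of_critical_point _ _ _ _ _ H1 H2 H3 H4 Hy) as (q' & nu' & Hq' & Ry).
    apply (scale_eq_normalized m1 m2 m3 m4 q q'); [assumption | assumption | apply Hx | apply Hy |].
    exact (reduced_crit_unique _ _ _ _ _ _ _ _ _ _ H12 H13 H14 H23 H24 H34 Rx Ry).
Qed.
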